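(* Let $c\in\mathsf{ACirc}[0,0]$. Then $[\![c]\!]=\mathrm{id}_0$ (that is, $\{(\bullet,\bullet)\}$) if and only if $c\uparrow$.
   Context: Fix a field $k$. Circuits: terms built from generators with sorts $(n,m)$: copier $\Delta:(1,2)$, discard $!:(1,0)$, amplifier $\mathsf{s}_r:(1,1)$ ($r\in k$), register $\mathsf{x}:(1,1)$, adder $+:(2,1)$, zero $0:(0,1)$, one $\mathbf{1}:(0,1)$; mirror images $\Delta^{op}:(2,1)$, $!^{op}:(0,1)$, $\mathsf{s}_r^{op}$, $\mathsf{x}^{op}:(1,1)$, $+^{op}:(1,2)$, $0^{op}:(1,0)$, $\mathbf{1}^{op}:(1,0)$; $\mathrm{id}_0:(0,0),\mathrm{id}_1:(1,1),\mathrm{sw}:(2,2)$; closed under $;$ and $\oplus$; $\mathsf{ACirc}[n,m]$: circuits of sort $(n,m)$. Denotation over the field $k(x)$ of polynomial fractions: $[\![\Delta]\!]=\{(p,(p,p))\}$, $[\![!]\!]=\{(p,\bullet)\}$, $[\![+]\!]=\{((p,q),p+q)\}$, $[\![0]\!]=\{(\bullet,0)\}$, $[\![\mathbf 1]\!]=\{(\bullet,1)\}$, $[\![\mathsf s_r]\!]=\{(p,rp)\}$, $[\![\mathsf x]\!]=\{(p,px)\}$ ($\bullet$ the unique element of $k(x)^0$); mirrored generators denote converse relations; structural generators denote identity, swap, $\{(\bullet,\bullet)\}$; $;$ is relational composition, $\oplus$ product of relations. Operational semantics: a state is a circuit with a value of $k$ in each register; initial state $c_0$ stores $0$ everywhere.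 Transitions $t\vdash c\xrightarrow[w]{v}c'$ at time $t\in\mathbb Z$: $\Delta$: $a/(a,a)$; $!$: $a/\bullet$; $+$: $(a,b)/a+b$; $0$: $\bullet/0$; $\mathsf s_r$: $a/ra$; $\mathsf x$ storing $b$: $a/b$, then stores $a$; $\mathbf 1$: $\bullet/1$ if $t=0$, $\bullet/0$ otherwise; mirrored generators: the same with left/right labels exchanged; $\mathrm{id}_1$: $a/a$; $\mathrm{sw}$: $(a,b)/(b,a)$; $\mathrm{id}_0$: $\bullet/\bullet$; in $c;d$ both components move at time $t$ agreeing on the shared middle label; in $c\oplus d$ both move at time $t$ with labels concatenated. A computation of $c$ starting at time $t\le0$ is a sequence of transitions $t\vdash c_0\to c_1$, $t+1\vdash c_1\to c_2,\dots$ from the initial state. For $c\in\mathsf{ACirc}[0,0]$, $c\uparrow$ means $c$ can perform an infinite computation. *)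

From HB Require Import structures.
From mathcomp Require Import all_boot all_order all_algebra.
From mathcomp Require Export fraction.
Set Implicit Arguments. Unset Strict Implicit. Unset Printing Implicit Defensive.
Import Order.TTheory GRing.Theory Num.Theory.
Local Open Scope ring_scope.

Section Circuits.
Variable k : fieldType.

Inductive gen : nat -> nat -> Type :=
| GCopy : gen 1 2
| GDisc : gen 1 0
| GAmp  : k -> gen 1 1
| GReg  : gen 1 1
| GAdd  : gen 2 1
| GZero : gen 0 1
| GOne  : gen 0 1.

Inductive circ : nat -> nat -> Type :=
| Gen   : forall n m, gen n m -> circ n m
| CoGen : forall n m, gen n m -> circ m n
| Id0   : circ 0 0
| Id1   : circ 1 1
| Sw    : circ 2 2
| Seq   : forall n m p, circ n m -> circ m p -> circ n p
| Par   : forall n m n' m', circ n m -> circ n' m' -> circ (n + n') (m + m').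

Definition Kx := {fraction {poly k}}.
Definition tofracK (p : {poly k}) : Kx := @FracField.tofrac _ p.
Definition xK : Kx := tofracK 'X.

Definition gden n m (g : gen n m) : 'rV[Kx]_n -> 'rV[Kx]_m -> Prop :=
  match g in gen n0 m0 return 'rV[Kx]_n0 -> 'rV[Kx]_m0 -> Prop with
  | GCopy => fun v w => w ord0 ord0 = v ord0 ord0 /\ w ord0 ord_max = v ord0 ord0
  | GDisc => fun _ _ => True
  | GAmp r => fun v w => w ord0 ord0 = tofracK r%:P * v ord0 ord0
  | GReg => fun v w => w ord0 ord0 = v ord0 ord0 * xK
  | GAdd => fun v w => w ord0 ord0 = v ord0 ord0 + v ord0 ord_max
  | GZero => fun _ w => w ord0 ord0 = 0
  | GOne => fun _ w => w ord0 ord0 = 1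
  end.

Fixpoint den n m (c : circ n m) : 'rV[Kx]_n -> 'rV[Kx]_m -> Prop :=
  match c in circ n0 m0 return 'rV[Kx]_n0 -> 'rV[Kx]_m0 -> Prop with
  | Gen _ _ g => fun v w => gden g v w
  | CoGen _ _ g => fun v w => gden g w v
  | Id0 => fun _ _ => True
  | Id1 => fun v w => w = v
  | Sw => fun v w => w ord0 ord0 = v ord0 ord_max /\ w ord0 ord_max = v ord0 ord0
  | Seq _ _ _ c d => fun v w => exists u, den c v u /\ den d u w
  | Par _ _ _ _ c d => fun v w =>
      den c (lsubmx v) (lsubmx w) /\ den d (rsubmx v) (rsubmx w)
  end.

Definition gstate n m (g : gen n m) : Type :=
  match g with GReg => k | _ => unit end.

Definition ginit n m (g : gen n m) : gstate g :=
  match g as g0 return gstate g0 with GReg => 0 | _ => tt end.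

Fixpoint state n m (c : circ n m) : Type :=
  match c with
  | Gen _ _ g => gstate g
  | CoGen _ _ g => gstate g
  | Seq _ _ _ c d => (state c * state d)%type
  | Par _ _ _ _ c d => (state c * state d)%type
  | _ => unit
  end.

Fixpoint init n m (c : circ n m) : state c :=
  match c as c0 return state c0 with
  | Gen _ _ g => ginit g
  | CoGen _ _ g => ginit g
  | Seq _ _ _ c d => (init c, init d)
  | Par _ _ _ _ c d => (init c, init d)
  | Id0 => tt | Id1 => tt | Sw => tt
  end.

(* gstep g t s s' v w : at time t, generator g in state s moves to s'
   with left label v and right label w. *)
Definition gstep n m (g : gen n m) (t : int) :
  gstate g -> gstate g -> 'rV[k]_n -> 'rV[k]_m -> Prop :=
  match g as g0 in gen n0 m0
    return gstate g0 -> gstate g0 -> 'rV[k]_n0 -> 'rV[k]_m0 -> Prop with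
  | GCopy => fun _ _ v w => w ord0 ord0 = v ord0 ord0 /\ w ord0 ord_max = v ord0 ord0
  | GDisc => fun _ _ _ _ => True
  | GAmp r => fun _ _ v w => w ord0 ord0 = r * v ord0 ord0
  | GReg => fun s s' v w => w ord0 ord0 = s /\ s' = v ord0 ord0
  | GAdd => fun _ _ v w => w ord0 ord0 = v ord0 ord0 + v ord0 ord_max
  | GZero => fun _ _ _ w => w ord0 ord0 = 0
  | GOne => fun _ _ _ w => w ord0 ord0 = (if t == 0 then 1 else 0)
  end.

Arguments gstep [n m] g t.

Fixpoint step n m (c : circ n m) (t : int) :
  state c -> state c -> 'rV[k]_n -> 'rV[k]_m -> Prop :=
  match c as c0 in circ n0 m0
    return state c0 -> state c0 -> 'rV[k]_n0 -> 'rV[k]_m0 -> Prop with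
  | Gen _ _ g => fun s s' v w => gstep g t s s' v w
  | CoGen _ _ g => fun s s' v w => gstep g t s s' w v
  | Id0 => fun _ _ _ _ => True
  | Id1 => fun _ _ v w => w = v
  | Sw => fun _ _ v w => w ord0 ord0 = v ord0 ord_max /\ w ord0 ord_max = v ord0 ord0
  | Seq _ _ _ c d => fun s s' v w =>
      exists u, @step _ _ c t s.1 s'.1 v u /\ @step _ _ d t s.2 s'.2 u w
  | Par _ _ _ _ c d => fun s s' v w =>
      @step _ _ c t s.1 s'.1 (lsubmx v) (lsubmx w) /\
      @step _ _ d t s.2 s'.2 (rsubmx v) (rsubmx w)
  end.

Arguments step [n m] c t.

Definition infinite_computation n m (c : circ n m) (t : int)
    (sigma : nat -> state c) : Prop :=
  sigma 0%N = init c /\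
  forall i : nat, exists v w, step c (t + i%:Z) (sigma i) (sigma i.+1) v w.

Arguments infinite_computation [n m] c t sigma.

(* c "up-arrow": c can perform an infinite computation (starting at some t <= 0). *)
Definition diverges n m (c : circ n m) : Prop :=
  exists (t : int) (sigma : nat -> state c), t <= 0 /\ infinite_computation c t sigma.

Arguments diverges [n m] c.

End Circuits.

(** A circuit denotes, in any {poly k}-module V in which the generator 1 is
    read as a chosen vector o, the set of pairs (v, w) for which some h solves
    the linear system v A + w B + h C = b o, where the polynomial matrices
    A, B, C, b depend only on the circuit.  With V = k(x) and o = 1 this is the
    denotation; with V the sequences over k, acted on by convolution, and
    o = x^N it is the set of traces of the computations started at time -N.
    For a closed circuit the theorem thus says that h C = b is solvable over
    k(x) iff h C = b x^N is solvable in sequences for some N.  Clearing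
    denominators and factoring the common denominator as x^N d0 with
    d0(0) <> 0, which is invertible as a power series, turns a rational
    solution into a sequence one.  Conversely, if there is no rational
    solution then some polynomial column g has C g = 0 but b g <> 0, and a
    sequence solution would give 0 = h C g = (b g) x^N. *)

From HB Require Import structures.
From mathcomp Require Import all_boot all_order all_algebra.
From mathcomp Require Import boolp functions generic_quotient.
From Corelib Require Import Setoid.
Set Implicit Arguments. Unset Strict Implicit. Unset Printing Implicit Defensive.
Import GRing.Theory Num.Theory.
Local Open Scope ring_scope.

Lemma rV0_eq (T : Type) (x y : 'rV[T]_0) : x = y.
Proof. by apply/matrixP => i []. Qed.

Lemma rV1P (T : Type) (x y : 'rV[T]_1) : x = y <-> x ord0 ord0 = y ord0 ord0.
Proof. by split=> [->//|E]; apply/matrixP => i j; rewrite !ord1. Qed.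

Lemma rV2P (T : Type) (x y : 'rV[T]_2) :
  x = y <-> x ord0 ord0 = y ord0 ord0 /\ x ord0 ord_max = y ord0 ord_max.
Proof.
split=> [->//|[E0 E1]]; apply/matrixP => i [[|[|//]] lt_j2]; rewrite ord1.
  by rewrite (_ : Ordinal _ = ord0) //; apply: val_inj.
by rewrite (_ : Ordinal _ = ord_max) //; apply: val_inj.
Qed.

Lemma big_ord2 (M : nmodType) (F : 'I_2 -> M) : \sum_i F i = F ord0 + F ord_max.
Proof. by rewrite big_ord_recr big_ord1; congr (F _ + _); apply: val_inj. Qed.

Lemma map_mx_injective (aT rT : Type) (f : aT -> rT) m n :
  injective f -> injective (@map_mx aT rT f m n).
Proof.
move=> f_inj A B /matrixP AB; apply/matrixP => i j.
by apply: f_inj; move: (AB i j); rewrite !mxE.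
Qed.

Lemma nsubmx_separating_col (F : fieldType) m n (A : 'M[F]_(m, n)) (b : 'rV_n) :
  ~~ (b <= A)%MS -> exists y : 'cV_n, A *m y = 0 /\ b *m y != 0.
Proof.
rewrite submxE => /rV0Pn[l bl_neq0]; exists (col l (cokermx A)).
rewrite colE (mulmxA A) (mulmxA b) mulmx_coker mul0mx -colE; split=> //.
by apply/rV0Pn; exists ord0; rewrite mxE.
Qed.

Section ClearDenominators.
Variable R : idomainType.
Local Notation tofrac := (@FracField.tofrac R).

Lemma frac_numden (x : {fraction R}) : exists n d, d != 0 /\ x * tofrac d = tofrac n.
Proof.
elim/quotW: x => x; exists \n_x, \d_x; split; first exact: denom_ratioP.
unlock FracField.tofrac.
transitivity (\pi_{fraction R} (FracField.mulf x (Ratio \d_x 1)))%qT.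
  exact: (esym (FracField.pi_mul _ _)).
apply/eqmodP; rewrite /= FracField.equivfE /FracField.mulf.
by rewrite !numden_Ratio ?mulr1 ?oner_neq0 ?mulf_neq0 ?denom_ratioP // mulrC.
Qed.

Lemma clear_denominators m n (M : 'M[{fraction R}]_(m, n)) :
  exists (d : R) (N : 'M[R]_(m, n)), d != 0 /\ map_mx tofrac N = tofrac d *: M.
Proof.
have /fin_all_exists[nd ndP] (ij : 'I_m * 'I_n) :
    exists nd : R * R, nd.2 != 0 /\ M ij.1 ij.2 * tofrac nd.2 = tofrac nd.1.
  by have [x [d xdP]] := frac_numden (M ij.1 ij.2); exists (x, d).
exists (\prod_ij (nd ij).2),
  (\matrix_(i, j) ((nd (i, j)).1 * \prod_(ij | ij != (i, j)) (nd ij).2)).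
split; first by rewrite prodf_seq_neq0; apply/allP => ij _; case: (ndP ij).
apply/matrixP => i j; rewrite !mxE [X in tofrac X * _](bigD1 (i, j)) //= !rmorphM.
by case: (ndP (i, j)) => _ /= <-; rewrite [RHS]mulrC mulrA.
Qed.

End ClearDenominators.

Section ModuleMatrices.
Variables (R : comPzRingType) (V : lmodType R).

Definition mulvm a r (v : 'rV[V]_a) (A : 'M[R]_(a, r)) : 'rV[V]_r :=
  \row_j \sum_i A i j *: v ord0 i.

Lemma mulvm_const r (x : V) (b : 'rV[R]_r) :
  mulvm (const_mx x) b = \row_j (b ord0 j *: x).
Proof. by apply/rowP => j; rewrite !mxE big_ord1 mxE. Qed.

Lemma mulvmA a b r (v : 'rV[V]_a) (A : 'M[R]_(a, b)) (B : 'M[R]_(b, r)) :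
  mulvm (mulvm v A) B = mulvm v (A *m B).
Proof.
apply/rowP => j; rewrite !mxE.
under eq_bigr do rewrite mxE scaler_sumr.
rewrite exchange_big /=; apply: eq_bigr => i _.
by rewrite mxE scaler_suml; apply: eq_bigr => l _; rewrite scalerA mulrC.
Qed.

Lemma mulvm0 a r (v : 'rV[V]_a) : mulvm v (0 : 'M_(a, r)) = 0.
Proof. by apply/rowP => j; rewrite !mxE big1 // => i _; rewrite mxE scale0r. Qed.

Lemma mul0vm a r (A : 'M[R]_(a, r)) : mulvm 0 A = 0.
Proof. by apply/rowP => j; rewrite !mxE big1 // => i _; rewrite mxE scaler0. Qed.

Lemma mulvm1 a (v : 'rV[V]_a) : mulvm v 1%:M = v.
Proof.
apply/rowP => j; rewrite mxE (bigD1 j) //= mxE eqxx scale1r big1 ?addr0 //.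
by move=> i /negbTE ne; rewrite mxE ne scale0r.
Qed.

Lemma mulvmN a r (v : 'rV[V]_a) (A : 'M[R]_(a, r)) : mulvm v (- A) = - mulvm v A.
Proof. by apply/rowP => j; rewrite !mxE -sumrN; apply: eq_bigr => i _; rewrite mxE scaleNr. Qed.

Lemma mulvm_row a r1 r2 (v : 'rV[V]_a) (A1 : 'M[R]_(a, r1)) (A2 : 'M[R]_(a, r2)) :
  mulvm v (row_mx A1 A2) = row_mx (mulvm v A1) (mulvm v A2).
Proof.
apply/rowP => j; rewrite -(fintype.splitK j); case: (fintype.split j) => j' /=;
  rewrite ?row_mxEl ?row_mxEr !mxE; apply: eq_bigr => i _;
  by rewrite ?row_mxEl ?row_mxEr.
Qed.

Lemma mulvm_col a1 a2 r (v1 : 'rV[V]_a1) (v2 : 'rV[V]_a2)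
    (A1 : 'M[R]_(a1, r)) (A2 : 'M[R]_(a2, r)) :
  mulvm (row_mx v1 v2) (col_mx A1 A2) = mulvm v1 A1 + mulvm v2 A2.
Proof.
apply/rowP => j; rewrite !mxE big_split_ord /=; congr (_ + _);
  by apply: eq_bigr => i _; rewrite ?row_mxEl ?col_mxEu ?row_mxEr ?col_mxEd.
Qed.

Lemma mulvm_block a1 a2 r1 r2 (v : 'rV[V]_(a1 + a2))
    (A1 : 'M[R]_(a1, r1)) (A2 : 'M[R]_(a2, r2)) :
  mulvm v (block_mx A1 0 0 A2) = row_mx (mulvm (lsubmx v) A1) (mulvm (rsubmx v) A2).
Proof.
rewrite -{1}(hsubmxK v) /block_mx mulvm_col !mulvm_row !mulvm0 add_row_mx.
by rewrite addr0 add0r.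
Qed.

Lemma mulvm_const_scale a r (x : V) (p : R) (A : 'M[R]_(a, r)) :
  mulvm (const_mx x) (p *: A) = mulvm (const_mx (p *: x)) A.
Proof.
by apply/rowP => j; rewrite !mxE; apply: eq_bigr => i _; rewrite !mxE scalerA mulrC.
Qed.

End ModuleMatrices.

Section ModuleDenotation.
Variables (k : fieldType) (V : lmodType {poly k}) (o : V).
Local Notation P := {poly k}.

Definition gen_mden n m (g : gen k n m) : 'rV[V]_n -> 'rV[V]_m -> Prop :=
  match g in gen _ n0 m0 return 'rV[V]_n0 -> 'rV[V]_m0 -> Prop with
  | GCopy => fun v w => w ord0 ord0 = v ord0 ord0 /\ w ord0 ord_max = v ord0 ord0
  | GDisc => fun _ _ => True
  | GAmp r => fun v w => w ord0 ord0 = r%:P *: v ord0 ord0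
  | GReg => fun v w => w ord0 ord0 = 'X *: v ord0 ord0
  | GAdd => fun v w => w ord0 ord0 = v ord0 ord0 + v ord0 ord_max
  | GZero => fun _ w => w ord0 ord0 = 0
  | GOne => fun _ w => w ord0 ord0 = o
  end.

Fixpoint mden n m (c : circ k n m) : 'rV[V]_n -> 'rV[V]_m -> Prop :=
  match c in circ _ n0 m0 return 'rV[V]_n0 -> 'rV[V]_m0 -> Prop with
  | Gen _ _ g => fun v w => gen_mden g v w
  | CoGen _ _ g => fun v w => gen_mden g w v
  | Id0 => fun _ _ => True
  | Id1 => fun v w => w = v
  | Sw => fun v w => w ord0 ord0 = v ord0 ord_max /\ w ord0 ord_max = v ord0 ord0
  | Seq _ _ _ c d => fun v w => exists u, mden c v u /\ mden d u w
  | Par _ _ _ _ c d => fun v w =>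
      mden c (lsubmx v) (lsubmx w) /\ mden d (rsubmx v) (rsubmx w)
  end.

Definition linsys n m q r (A : 'M[P]_(n, r)) (B : 'M[P]_(m, r)) (C : 'M[P]_(q, r))
    (b : 'rV[P]_r) (v : 'rV[V]_n) (w : 'rV[V]_m) :=
  exists h : 'rV[V]_q, mulvm v A + mulvm w B + mulvm h C = mulvm (const_mx o) b.

Definition solvable q r (C : 'M[P]_(q, r)) (b : 'rV[P]_r) :=
  exists h : 'rV[V]_q, mulvm h C = mulvm (const_mx o) b.

Lemma linsys00 n m q r (A : 'M[P]_(n, r)) (B : 'M[P]_(m, r)) C b :
  linsys A B C b 0 0 <-> solvable (q := q) C b.
Proof. by split=> -[h Eh]; exists h; move: Eh; rewrite !mul0vm !add0r. Qed.

End ModuleDenotation.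

Section Presentation.
Variable k : fieldType.
Local Notation P := {poly k}.

Definition gen_mx n m (g : gen k n m) : 'M[P]_(n, m) :=
  match g in gen _ n0 m0 return 'M[P]_(n0, m0) with
  | GAmp r => r%:P%:M | GReg => 'X%:M | GCopy | GAdd => const_mx 1 | _ => 0
  end.

Definition gen_cst n m (g : gen k n m) : 'rV[P]_m :=
  match g in gen _ n0 m0 return 'rV[P]_m0 with GOne => 1 | _ => 0 end.

Definition swap_mx : 'M[P]_2 := \matrix_(i, j) (i != j)%:R.

Section Module.
Variables (V : lmodType P) (o : V).

Lemma gen_mdenE n m (g : gen k n m) v w :
  gen_mden o g v w <-> w = mulvm v (gen_mx g) + mulvm (const_mx o) (gen_cst g).
Proof.
case: g v w => [||r||||] v w /=; rewrite ?mulvm0 ?mul0vm ?addr0 ?add0r.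
- by rewrite rV2P !mxE !big_ord1 !mxE !scale1r.
- by split=> // _; apply: rV0_eq.
- by rewrite rV1P !mxE big_ord1 mxE eqxx.
- by rewrite rV1P !mxE big_ord1 mxE eqxx.
- by rewrite rV1P !mxE big_ord2 !mxE !scale1r.
- by rewrite rV1P mxE; split.
- by rewrite rV1P !mxE big_ord1 !mxE eqxx scale1r.
Qed.

Lemma swap_mdenE (v w : 'rV[V]_2) :
  (w ord0 ord0 = v ord0 ord_max /\ w ord0 ord_max = v ord0 ord0) <->
  w = mulvm v swap_mx + mulvm (const_mx o) (0 : 'rV_2).
Proof.
by rewrite mulvm0 addr0 rV2P !mxE !big_ord2 !mxE /= !scale0r !scale1r add0r addr0.
Qed.

Lemma linsys_nil n m r (A : 'M[P]_(n, r)) (B : 'M[P]_(m, r)) (C : 'M[P]_(0, r)) b v w :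
  linsys o A B C b v w <-> mulvm v A + mulvm w B = mulvm (const_mx o) b.
Proof.
split=> [[h]|E]; last by exists 0; rewrite mul0vm addr0.
by rewrite thinmx0 mul0vm addr0.
Qed.

Lemma linsys_graph n m (M : 'M[P]_(n, m)) (b : 'rV[P]_m) v w :
  w = mulvm v M + mulvm (const_mx o) b <-> linsys o (- M) 1%:M (0 : 'M_(0, m)) b v w.
Proof.
rewrite linsys_nil mulvmN mulvm1.
by split=> [->|<-]; rewrite ?addKr ?addNKr.
Qed.

Lemma linsys_cograph n m (M : 'M[P]_(m, n)) (b : 'rV[P]_n) v w :
  v = mulvm w M + mulvm (const_mx o) b <-> linsys o 1%:M (- M) (0 : 'M_(0, n)) b v w.
Proof.
rewrite linsys_nil mulvmN mulvm1.
by split=> [->|<-]; [rewrite addrAC subrr add0r | rewrite addrC subrK].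
Qed.

Lemma linsys_seq n m p qc qd rc rd (Ac : 'M[P]_(n, rc)) (Bc : 'M[P]_(m, rc))
    (Cc : 'M[P]_(qc, rc)) (bc : 'rV[P]_rc) (Ad : 'M[P]_(m, rd)) (Bd : 'M[P]_(p, rd))
    (Cd : 'M[P]_(qd, rd)) (bd : 'rV[P]_rd) v w :
  (exists u, linsys o Ac Bc Cc bc v u /\ linsys o Ad Bd Cd bd u w) <->
  linsys o (row_mx Ac 0) (row_mx 0 Bd) (col_mx (row_mx Bc Ad) (block_mx Cc 0 0 Cd))
    (row_mx bc bd) v w.
Proof.
have E (u : 'rV[V]_m) hc hd :
    mulvm v (row_mx Ac 0) + mulvm w (row_mx 0 Bd) +
    mulvm (row_mx u (row_mx hc hd)) (col_mx (row_mx Bc Ad) (block_mx Cc 0 0 Cd)) =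
    row_mx (mulvm v Ac + mulvm u Bc + mulvm hc Cc) (mulvm u Ad + mulvm w Bd + mulvm hd Cd).
  rewrite mulvm_col mulvm_block !mulvm_row !mulvm0 !add_row_mx row_mxKl row_mxKr.
  by rewrite addr0 add0r !addrA (addrC (mulvm w Bd)).
split=> [[u [[hc Ec] [hd Ed]]]|[h]].
  by exists (row_mx u (row_mx hc hd)); rewrite E Ec Ed mulvm_row.
rewrite -(hsubmxK h) -(hsubmxK (rsubmx h)) E mulvm_row => /eq_row_mx[Ec Ed].
by exists (lsubmx h); split; [exists (lsubmx (rsubmx h)) | exists (rsubmx (rsubmx h))].
Qed.

Lemma linsys_par n m n' m' qc qd rc rd (Ac : 'M[P]_(n, rc)) (Bc : 'M[P]_(m, rc))
    (Cc : 'M[P]_(qc, rc)) (bc : 'rV[P]_rc) (Ad : 'M[P]_(n', rd)) (Bd : 'M[P]_(m', rd))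
    (Cd : 'M[P]_(qd, rd)) (bd : 'rV[P]_rd) v w :
  linsys o Ac Bc Cc bc (lsubmx v) (lsubmx w) /\
    linsys o Ad Bd Cd bd (rsubmx v) (rsubmx w) <->
  linsys o (block_mx Ac 0 0 Ad) (block_mx Bc 0 0 Bd) (block_mx Cc 0 0 Cd)
    (row_mx bc bd) v w.
Proof.
split=> [[[hc Ec] [hd Ed]]|[h]].
  exists (row_mx hc hd).
  by rewrite !mulvm_block row_mxKl row_mxKr !add_row_mx Ec Ed mulvm_row.
rewrite !mulvm_block !add_row_mx mulvm_row => /eq_row_mx[Ec Ed].
by split; [exists (lsubmx h) | exists (rsubmx h)].
Qed.

End Module.

Definition presents n m (c : circ k n m) q r (A : 'M[P]_(n, r)) (B : 'M[P]_(m, r))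
    (C : 'M[P]_(q, r)) (b : 'rV[P]_r) :=
  forall (V : lmodType P) (o : V) v w, mden o c v w <-> linsys o A B C b v w.

Lemma presentation n m (c : circ k n m) :
  exists q r A B C b, @presents n m c q r A B C b.
Proof.
elim: c => [n' m' g|n' m' g||||n' m' p' c [qc [rc [Ac [Bc [Cc [bc Hc]]]]]]
    d [qd [rd [Ad [Bd [Cd [bd Hd]]]]]]|n1 m1 n2 m2 c [qc [rc [Ac [Bc [Cc [bc Hc]]]]]]
    d [qd [rd [Ad [Bd [Cd [bd Hd]]]]]]].
- exists 0%N, m', (- gen_mx g), 1%:M, 0, (gen_cst g) => V o v w.
  by rewrite -linsys_graph -gen_mdenE.
- exists 0%N, m', 1%:M, (- gen_mx g), 0, (gen_cst g) => V o v w.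
  by rewrite -linsys_cograph -gen_mdenE.
- exists 0%N, 0%N, (- 0), 1%:M, 0, 0 => V o v w.
  by rewrite -linsys_graph; split=> // _; apply: rV0_eq.
- exists 0%N, 1%N, (- 1%:M), 1%:M, 0, 0 => V o v w.
  by rewrite -linsys_graph mulvm0 mulvm1 addr0.
- exists 0%N, 2%N, (- swap_mx), 1%:M, 0, 0 => V o v w.
  by rewrite -linsys_graph -swap_mdenE.
- exists (m' + (qc + qd))%N, (rc + rd)%N, (row_mx Ac 0), (row_mx 0 Bd),
    (col_mx (row_mx Bc Ad) (block_mx Cc 0 0 Cd)), (row_mx bc bd) => V o v w /=.
  rewrite -linsys_seq.
  by split=> -[u [/(Hc V o) Ec /(Hd V o) Ed]]; exists u.
- exists (qc + qd)%N, (rc + rd)%N, (block_mx Ac 0 0 Ad), (block_mx Bc 0 0 Bd),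
    (block_mx Cc 0 0 Cd), (row_mx bc bd) => V o v w /=.
  by rewrite -linsys_par Hc Hd.
Qed.

End Presentation.

HB.instance Definition _ (k : fieldType) :=
  GRing.RMorphism.copy (@tofracK k) (@FracField.tofrac _).

Section RationalFunctions.
Variable k : fieldType.
Local Notation P := {poly k}.

(* k(x) as a {poly k}-module, on an alias so that Kx keeps its field structure. *)
Definition frac_mod := Kx k.
HB.instance Definition _ := GRing.Zmodule.on frac_mod.
Local Notation K := frac_mod.

Definition frac_scale (p : P) (f : K) : K := tofracK p * f.

Lemma frac_scaleA p q f : frac_scale p (frac_scale q f) = frac_scale (p * q) f.
Proof. by rewrite /frac_scale rmorphM mulrA. Qed.

Lemma frac_scale1 : left_id 1 frac_scale.
Proof. by move=> f; rewrite /frac_scale rmorph1 mul1r. Qed.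

Lemma frac_scaleDr : right_distributive frac_scale +%R.
Proof. by move=> p f g; rewrite /frac_scale mulrDr. Qed.

Lemma frac_scaleDl f : {morph frac_scale^~ f : p q / p + q}.
Proof. by move=> p q; rewrite /frac_scale rmorphD mulrDl. Qed.

HB.instance Definition _ := GRing.Zmodule_isLmodule.Build P K
  frac_scaleA frac_scale1 frac_scaleDr frac_scaleDl.

Lemma frac_scaleE p (f : K) : p *: f = tofracK p * f.
Proof. by []. Qed.

Lemma den_mden n m (c : circ k n m) v w : den c v w <-> mden (1 : K) c v w.
Proof.
elim: c v w => [n' m' [||r||||]|n' m' [||r||||]||||n' m' p' c IHc d IHd
  |n1 m1 n2 m2 c IHc d IHd] v w //=.
all: try by rewrite frac_scaleE mulrC.
- by split=> -[u [/IHc Ec /IHd Ed]]; exists u.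
- by rewrite IHc IHd.
Qed.

Lemma mulvm_frac q r (h : 'rV[Kx k]_q) (C : 'M[P]_(q, r)) :
  mulvm (h : 'rV[K]_q) C = h *m map_mx (@tofracK k) C.
Proof.
by apply/rowP => j; rewrite !mxE; apply: eq_bigr => i _; rewrite mxE mulrC.
Qed.

End RationalFunctions.

Section Series.
Variable k : fieldType.
Local Notation P := {poly k}.

Definition series := nat -> k.
HB.instance Definition _ := GRing.Zmodule.on series.

Definition series_trunc n (s : series) : P := \poly_(i < n.+1) s i.

Definition series_scale (p : P) (s : series) : series :=
  fun n => \sum_(j < n.+1) p`_j * s (n - j)%N.

Lemma series_scaleE p s n : series_scale p s n = (p * series_trunc n s)`_n.
Proof. by rewrite coefM; apply: eq_bigr => j _; rewrite coef_poly ltnS leq_subr. Qed.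

Lemma coefM_series_trunc p s m n :
  (m <= n)%N -> (p * series_trunc n s)`_m = (p * series_trunc m s)`_m.
Proof.
move=> le_mn; rewrite !coefM; apply: eq_bigr => i _.
by rewrite !coef_poly !ltnS leq_subr (leq_trans (leq_subr _ _) le_mn).
Qed.

Lemma series_scaleA p q s :
  series_scale p (series_scale q s) = series_scale (p * q) s.
Proof.
apply: funext => n; rewrite !series_scaleE -mulrA coefM [RHS]coefM.
apply: eq_bigr => j _; rewrite coef_poly ltnS leq_subr series_scaleE.
by rewrite coefM_series_trunc ?leq_subr.
Qed.

Lemma series_scale1 : left_id 1 series_scale.
Proof.
move=> s; apply: funext => n; rewrite /series_scale big_ord_recl coef1 mul1r subn0.
by rewrite big1 ?addr0 // => i _; rewrite coef1 mul0r.
Qed.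

Lemma series_scaleDr : right_distributive series_scale +%R.
Proof.
move=> p s t; apply: funext => n.
transitivity (series_scale p s n + series_scale p t n); last by [].
by rewrite /series_scale -big_split; apply: eq_bigr => j _; exact: mulrDr.
Qed.

Lemma series_scaleDl s : {morph series_scale^~ s : p q / p + q}.
Proof.
move=> p q; apply: funext => n.
transitivity (series_scale p s n + series_scale q s n); last by [].
by rewrite /series_scale -big_split; apply: eq_bigr => j _; rewrite coefD mulrDl.
Qed.

HB.instance Definition _ := GRing.Zmodule_isLmodule.Build P series
  series_scaleA series_scale1 series_scaleDr series_scaleDl.

Lemma scale_seriesE p (s : series) n : (p *: s) n = (p * series_trunc n s)`_n.
Proof. exact: series_scaleE. Qed.

Lemma scale_polyC_series r (s : series) n : (r%:P *: s) n = r * s n.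
Proof. by rewrite scale_seriesE coefCM coef_poly ltnSn. Qed.

Lemma scale_X_series (s : series) n : ('X *: s) n = if n is n'.+1 then s n' else 0.
Proof. by rewrite scale_seriesE coefXM; case: n => // n; rewrite coef_poly ltnS leqnSn. Qed.

Definition delta N : series := fun n => (n == N)%:R.

Lemma series_trunc_delta N n : (N <= n)%N -> series_trunc n (delta N) = 'X^N.
Proof.
move=> le_Nn; apply/polyP => i; rewrite coef_poly coefXn ltnS.
by case: (leqP i n) => // lt_ni; case: eqP => // eq_iN; rewrite eq_iN ltnNge le_Nn in lt_ni.
Qed.

Lemma scale_Xn_delta0 N : 'X^N *: delta 0 = delta N.
Proof.
by apply: funext => n; rewrite scale_seriesE series_trunc_delta // expr0 mulr1 coefXn.
Qed.

Lemma scale_delta_neq0 (d : P) N : d != 0 -> d *: delta N != 0.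
Proof.
move=> d_neq0; apply/eqP => /(congr1 (fun s : series => s (N + (size d).-1)%N)).
rewrite scale_seriesE series_trunc_delta ?leq_addr // coefMXn ltnNge leq_addr addKn.
by rewrite -lead_coefE; apply/eqP; rewrite lead_coef_eq0.
Qed.

Section SeriesInverse.
Variables (p : P) (p0_neq0 : p`_0 != 0).

(* Each step kills the coefficient of x^n in p * inv_approx n. *)
Fixpoint inv_approx n : P :=
  if n is n'.+1 then
    inv_approx n' - ((p * inv_approx n')`_n / p`_0) *: 'X^n
  else (p`_0)^-1%:P.

Lemma inv_approx_stable i n : (i <= n)%N -> (inv_approx n)`_i = (inv_approx i)`_i.
Proof.
elim: n => [|n IHn]; first by rewrite leqn0 => /eqP ->.
rewrite leq_eqVlt => /orP[/eqP-> //|lt_in].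
by rewrite /= coefB coefZ coefXn ltn_eqF // mulr0 subr0 IHn.
Qed.

Lemma inv_approxP i n : (i <= n)%N -> (p * inv_approx n)`_i = (i == 0%N)%:R.
Proof.
elim: n i => [|n IHn] i.
  by rewrite leqn0 => /eqP->; rewrite /= coefMC mulfV.
rewrite /= mulrBr -scalerAr coefB coefZ coefMXn.
rewrite leq_eqVlt => /orP[/eqP->|lt_in]; last by rewrite lt_in mulr0 subr0 IHn.
by rewrite ltnn subnn divfK // subrr.
Qed.

Lemma series_inverse : exists e : series, p *: e = delta 0.
Proof.
exists (fun n => (inv_approx n)`_n); apply: funext => n.
rewrite scale_seriesE /delta -(inv_approxP (leqnn n)) !coefM.
by apply: eq_bigr => j _; rewrite coef_poly ltnS leq_subr inv_approx_stable ?leq_subr.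
Qed.

End SeriesInverse.

Lemma scale_delta_onto (d : P) : d != 0 -> exists N (e : series), d *: e = delta N.
Proof.
move=> d_neq0; have [N [d0 d0_root def_d]] := multiplicity_XsubC d 0.
have d0_0 : d0`_0 != 0 by rewrite -horner_coef0; rewrite d_neq0 in d0_root.
have [e d0e] := series_inverse d0_0.
by exists N, e; rewrite def_d polyC0 subr0 mulrC -scalerA d0e scale_Xn_delta0.
Qed.

End Series.
Arguments delta {k} N.

Section Runs.
Variable k : fieldType.

Definition unseries n (v : 'rV[series k]_n) (i : nat) : 'rV[k]_n := \row_j v ord0 j i.

Definition seriesv n (v : nat -> 'rV[k]_n) : 'rV[series k]_n :=
  \row_j fun i => v i ord0 j.

Lemma seriesvK n : cancel (@seriesv n) (@unseries n).
Proof. by move=> v; apply: funext => i; apply/rowP => j; rewrite !mxE. Qed.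

Lemma unseriesK n : cancel (@unseries n) (@seriesv n).
Proof. by move=> v; apply/rowP => j; rewrite mxE; apply: funext => i; rewrite mxE. Qed.

Lemma unseries_lsub n1 n2 (v : 'rV[series k]_(n1 + n2)) i :
  lsubmx (unseries v i) = unseries (lsubmx v) i.
Proof. by apply/rowP => j; rewrite !mxE. Qed.

Lemma unseries_rsub n1 n2 (v : 'rV[series k]_(n1 + n2)) i :
  rsubmx (unseries v i) = unseries (rsubmx v) i.
Proof. by apply/rowP => j; rewrite !mxE. Qed.

Definition gen_run n m (g : gen k n m) (t : int)
    (v : nat -> 'rV[k]_n) (w : nat -> 'rV[k]_m) :=
  exists sigma : nat -> gstate g, sigma 0%N = ginit g /\
    forall i, gstep (g := g) (t + i%:Z) (sigma i) (sigma i.+1) (v i) (w i).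

Definition run n m (c : circ k n m) (t : int)
    (v : nat -> 'rV[k]_n) (w : nat -> 'rV[k]_m) :=
  exists sigma : nat -> state c, sigma 0%N = init c /\
    forall i, step (c := c) (t + i%:Z) (sigma i) (sigma i.+1) (v i) (w i).

Lemma time_eq0 (N i : nat) : (- N%:Z + i%:Z == 0) = (i == N).
Proof. by rewrite addrC subr_eq0 eqz_nat. Qed.

Lemma gen_run_mden N n m (g : gen k n m) v w :
  gen_run g (- N%:Z) (unseries v) (unseries w) <-> gen_mden (delta N) g v w.
Proof.
case: g v w => [||r||||] v w /=.
- split=> [[? [_ run_vw]]|[w0 w1]].
    by split; apply: funext => i; case: (run_vw i); rewrite !mxE.
  by exists (fun _ => tt); split=> // i /=; rewrite !mxE w0 w1.
- by split=> // _; exists (fun _ => tt).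
- split=> [[? [_ run_vw]]|w0].
    by apply: funext => i; move: (run_vw i) => /=; rewrite !mxE scale_polyC_series.
  by exists (fun _ => tt); split=> // i /=; rewrite !mxE w0 scale_polyC_series.
- split=> [[sigma [sigma0 run_vw]]|w0].
    apply: funext => i; rewrite scale_X_series; case: i => [|i].
      by case: (run_vw 0%N); rewrite !mxE sigma0.
    by case: (run_vw i.+1); case: (run_vw i); rewrite !mxE => _ -> ->.
  exists (fun i => w ord0 ord0 i); split; first by rewrite w0 scale_X_series.
  by move=> i /=; rewrite !mxE w0 !scale_X_series.
- split=> [[? [_ run_vw]]|w0].
    by apply: funext => i; move: (run_vw i) => /=; rewrite !mxE.
  by exists (fun _ => tt); split=> // i /=; rewrite !mxE w0.
- split=> [[? [_ run_vw]]|w0].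
    by apply: funext => i; move: (run_vw i) => /=; rewrite !mxE.
  by exists (fun _ => tt); split=> // i /=; rewrite !mxE w0.
- split=> [[? [_ run_vw]]|w0].
    apply: funext => i; move: (run_vw i) => /=.
    by rewrite !mxE time_eq0 /delta; case: eqP.
  by exists (fun _ => tt); split=> // i /=; rewrite !mxE w0 time_eq0 /delta; case: eqP.
Qed.

Lemma run_mden N n m (c : circ k n m) v w :
  run c (- N%:Z) (unseries v) (unseries w) <-> mden (delta N) c v w.
Proof.
elim: c v w => [n' m' g|n' m' g||||n' m' p' c IHc d IHd|n1 m1 n2 m2 c IHc d IHd] v w /=.
- exact: gen_run_mden.
- exact: gen_run_mden.
- by split=> // _; exists (fun _ => tt).
- split=> [[? [_ run_vw]]|->]; last by exists (fun _ => tt).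
  by apply: (can_inj (@unseriesK _)); apply: funext.
- split=> [[? [_ run_vw]]|[w0 w1]].
    by split; apply: funext => i; case: (run_vw i); rewrite !mxE.
  by exists (fun _ => tt); split=> // i /=; rewrite !mxE w0 w1.
- split=> [[sigma [sigma0 run_vw]]|[u [/IHc[sc [sc0 run_c]] /IHd[sd [sd0 run_d]]]]].
    have [u run_vwu] := choice run_vw.
    exists (seriesv u); split.
      apply/IHc; exists (fun i => (sigma i).1); rewrite sigma0 seriesvK.
      by split=> // i; case: (run_vwu i).
    apply/IHd; exists (fun i => (sigma i).2); rewrite sigma0 seriesvK.
    by split=> // i; case: (run_vwu i).
  by exists (fun i => (sc i, sd i)); rewrite sc0 sd0; split=> // i; exists (unseries u i).
- split=> [[sigma [sigma0 run_vw]]|[/IHc[sc [sc0 run_c]] /IHd[sd [sd0 run_d]]]].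
    split; [apply/IHc; exists (fun i => (sigma i).1) | apply/IHd; exists (fun i => (sigma i).2)];
      rewrite sigma0; split=> // i; case: (run_vw i);
      by rewrite ?unseries_lsub ?unseries_rsub.
  exists (fun i => (sc i, sd i)); rewrite sc0 sd0; split=> // i.
  by rewrite /= !unseries_lsub !unseries_rsub.
Qed.

End Runs.

Lemma diverges_mden (k : fieldType) (c : circ k 0 0) :
  diverges c <-> exists N, mden (delta N) c 0 0.
Proof.
split=> [[t [sigma [t_le0 [sigma0 steps]]]]|[N /run_mden[sigma [sigma0 steps]]]].
  have Et : - (absz t)%:Z = t by rewrite lez0_abs // opprK.
  exists (absz t); apply/run_mden; exists sigma; split=> // i.
  have [v [w]] := steps i; rewrite Et.
  by rewrite (rV0_eq v (unseries 0 i)) (rV0_eq w (unseries 0 i)).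
exists (- N%:Z), sigma; split; first by rewrite oppr_le0.
by split=> // i; exists (unseries 0 i), (unseries 0 i).
Qed.

Section Solvability.
Variable k : fieldType.
Local Notation P := {poly k}.
Local Notation tf := (@tofracK k).

Lemma tofracK_inj : injective tf.
Proof. by move=> p q /eqP; rewrite tofrac_eq => /eqP. Qed.

Lemma frac_solvableP q r (C : 'M[P]_(q, r)) b :
  solvable (1 : frac_mod k) C b <-> (map_mx tf b <= map_mx tf C)%MS.
Proof.
rewrite /solvable; have -> : mulvm (const_mx (1 : frac_mod k)) b = map_mx tf b.
  by apply/rowP => j; rewrite mulvm_const mxE [RHS]mxE frac_scaleE mulr1.
split=> [[h Eh]|/submxP[h Eh]]; last by exists h; rewrite mulvm_frac Eh.
by apply/submxP; exists h; rewrite -Eh mulvm_frac.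
Qed.

Lemma series_solvable_of_frac q r (C : 'M[P]_(q, r)) b :
  (map_mx tf b <= map_mx tf C)%MS -> exists N, solvable (delta N) C b.
Proof.
case/submxP=> h Eh; have [d [G [d_neq0 EG]]] := clear_denominators h.
have EGC : G *m C = d *: b.
  apply: (map_mx_injective tofracK_inj).
  by rewrite map_mxM map_mxZ EG -scalemxAl -Eh.
have [N [e de]] := scale_delta_onto d_neq0.
exists N, (mulvm (const_mx e) G).
by rewrite mulvmA EGC mulvm_const_scale de.
Qed.

Lemma frac_solvable_of_series N q r (C : 'M[P]_(q, r)) b :
  solvable (delta N) C b -> (map_mx tf b <= map_mx tf C)%MS.
Proof.
case=> h Eh; apply: contraT => /nsubmx_separating_col[y [Cy0 by_neq0]].
have [d [g [d_neq0 Eg]]] := clear_denominators y.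
have Cg0 : C *m g = 0.
  apply: (map_mx_injective tofracK_inj).
  rewrite map_mxM Eg -scalemxAr Cy0 scaler0.
  by apply/matrixP => i j; rewrite !mxE rmorph0.
have bg_neq0 : (b *m g) ord0 ord0 != 0.
  have /rV0Pn[l] := by_neq0; rewrite ord1 => by00.
  rewrite -tofrac_eq0; have /matrixP/(_ ord0 ord0) := map_mxM tf b g.
  rewrite mxE Eg -scalemxAr mxE => ->.
  by rewrite mxE; apply: mulf_neq0; rewrite ?tofrac_eq0.
have := congr1 (fun s => mulvm s g) Eh; rewrite !mulvmA Cg0 mulvm0 mulvm_const.
move=> /rowP/(_ ord0); rewrite [RHS]mxE [LHS]mxE => /esym/eqP.
by rewrite (negbTE (scale_delta_neq0 N bg_neq0)).
Qed.

End Solvability.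

Theorem proposition5 (k : fieldType) (c : circ k 0 0) :
  (forall u v : 'rV[Kx k]_0, den c u v <-> u = v) <-> diverges c.
Proof.
have [q [r [A [B [C [b pres]]]]]] := presentation c.
have solvableP (V : lmodType {poly k}) (o : V) : mden o c 0 0 <-> solvable o C b.
  by rewrite pres linsys00.
have denP : (forall u v : 'rV[Kx k]_0, den c u v <-> u = v) <-> den c 0 0.
  by split=> [->//|c00 u v]; rewrite (rV0_eq u 0) (rV0_eq v 0); split.
rewrite denP den_mden solvableP frac_solvableP diverges_mden.
split=> [/series_solvable_of_frac[N /solvableP]|[N /solvableP/frac_solvable_of_series//]].
by exists N.
Qed.
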